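(* Let $G$ be a graph with no induced $P_7$, $C_4$, $C_6$ or $C_7$, let $H=(B_1,\dots,B_5)$ be a maximal nice blowup of $C_5$ in $G$, and let $i\in\{1,\dots,5\}$. If $xy$ is an edge with $x,y\in A_3(i)$, then $N_{B_i}(x)=N_{B_i}(y)$.
   Context: Indices modulo $5$. A nice blowup of $C_5$ is a tuple $(B_1,\dots,B_5)$ of pairwise disjoint cliques such that every vertex of $B_j$ has a neighbor in $B_{j-1}$ and in $B_{j+1}$, $B_j$ is anticomplete to $B_{j+2}$, and there are no $a\in B_j$, distinct $b,c\in B_{j+1}$, $d\in B_{j+2}$ with $G[\{a,b,c,d\}]\cong P_4$; $V(H)=\bigcup B_j$; maximal means no nice blowup has vertex set strictly containing $V(H)$. For $v\notin V(H)$, $\operatorname{supp}(v)$ is the set of $j$ such that $v$ has a neighbor in $B_j$; $A_3(i)=\{v\notin V(H):\operatorname{supp}(v)=\{i-1,i,i+1\}\}$; $N_S(v)$ is the set of neighbors of $v$ in $S$. *)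

From mathcomp Require Import all_boot.
Set Implicit Arguments. Unset Strict Implicit. Unset Printing Implicit Defensive.

Definition simple_graph (T : finType) (adj : rel T) : Prop :=
  symmetric adj /\ irreflexive adj.

Definition induced_path (T : finType) (adj : rel T) (s : seq T) : Prop :=
  uniq s /\ forall (x0 : T) i j, i < size s -> j < size s ->
    adj (nth x0 s i) (nth x0 s j) = (i.+1 == j) || (j.+1 == i).

Definition induced_cycle (T : finType) (adj : rel T) (s : seq T) : Prop :=
  uniq s /\ forall (x0 : T) i j, i < size s -> j < size s ->
    adj (nth x0 s i) (nth x0 s j) =
      (j == i.+1 %% size s) || (i == j.+1 %% size s).

Definition has_induced_P (T : finType) (adj : rel T) (k : nat) : Prop :=
  exists s : seq T, size s = k /\ induced_path adj s.
Definition has_induced_C (T : finType) (adj : rel T) (k : nat) : Prop :=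
  exists s : seq T, size s = k /\ induced_cycle adj s.

Definition induces_P4 (T : finType) (adj : rel T) (a b c d : T) : Prop :=
  exists s : seq T, perm_eq s [:: a; b; c; d] /\ induced_path adj s.

Definition nxt (j : 'I_5) : 'I_5 := inord ((j + 1) %% 5).
Definition prv (j : 'I_5) : 'I_5 := inord ((j + 4) %% 5).

Definition is_clique (T : finType) (adj : rel T) (A : {set T}) : Prop :=
  forall x y, x \in A -> y \in A -> x != y -> adj x y.

Definition anticomplete (T : finType) (adj : rel T) (A B : {set T}) : Prop :=
  forall x y, x \in A -> y \in B -> ~~ adj x y.

Definition nice_blowup (T : finType) (adj : rel T) (B : 'I_5 -> {set T}) : Prop :=
  (forall j k, j != k -> [disjoint B j & B k]) /\
  (forall j, is_clique adj (B j)) /\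
  (forall j v, v \in B j ->
     (exists2 u, u \in B (prv j) & adj v u) /\
     (exists2 u, u \in B (nxt j) & adj v u)) /\
  (forall j, anticomplete adj (B j) (B (nxt (nxt j)))) /\
  (forall j a b c d, a \in B j -> b \in B (nxt j) -> c \in B (nxt j) ->
     b != c -> d \in B (nxt (nxt j)) -> ~ induces_P4 adj a b c d).

Definition vert (T : finType) (B : 'I_5 -> {set T}) : {set T} :=
  \bigcup_(j < 5) B j.

Definition maximal_nice_blowup (T : finType) (adj : rel T)
    (B : 'I_5 -> {set T}) : Prop :=
  nice_blowup adj B /\
  ~ (exists B' : 'I_5 -> {set T}, nice_blowup adj B' /\ vert B \proper vert B').

Definition supp (T : finType) (adj : rel T) (B : 'I_5 -> {set T}) (v : T)
  : {set 'I_5} := [set j | [exists u in B j, adj v u]].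

Definition A3 (T : finType) (adj : rel T) (B : 'I_5 -> {set T}) (i : 'I_5)
  : {set T} :=
  [set v | (v \notin vert B) && (supp adj B v == [set prv i; i; nxt i])].

Definition nbhd_in (T : finType) (adj : rel T) (S : {set T}) (v : T) : {set T} :=
  [set u in S | adj v u].

(* Suppose some u in B_i is adjacent to x but not to y.  Then x is complete to
   B_i: a non-neighbour w in B_i of x would make y-x-u-w an induced P_4 all of
   whose vertices have neighbours in the anticomplete cliques B_(i-1) and
   B_(i+1).  Since G has no C_4, adjacent vertices have nested neighbourhoods in
   a clique and non-adjacent ones cannot meet in both cliques; chasing these
   neighbourhoods along the P_4 yields a C_4 or a C_6.  But a vertex of A_3(i)
   complete to B_i can be added to B_i: a P_4 through it violating niceness
   would close, around the bags B_(i+2) and B_(i+3), into a C_6 or a C_7.  This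
   contradicts the maximality of the blowup. *)

From mathcomp Require Import all_boot zify.
Set Implicit Arguments. Unset Strict Implicit. Unset Printing Implicit Defensive.

(** * Positions on the 5-cycle *)

Definition after (i : 'I_5) (k : nat) : 'I_5 := inord ((i + k) %% 5).

Lemma nxtE j : nxt j = after j 1. Proof. by []. Qed.

Lemma prvE j : prv j = after j 4. Proof. by []. Qed.

Lemma val_after i k : (after i k : nat) = (i + k) %% 5.
Proof. by rewrite inordK // ltn_pmod. Qed.

Lemma after_after i k l : after (after i k) l = after i (k + l).
Proof. by apply: ord_inj; rewrite !val_after modnDml addnA. Qed.

Lemma after0 i : after i 0 = i.
Proof. by apply: ord_inj; rewrite val_after addn0 modn_small. Qed.

Lemma eq_after i k l : (after i k == after i l) = (k == l %[mod 5]).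
Proof. by rewrite -(inj_eq (@ord_inj 5)) !val_after eqn_modDl. Qed.

Lemma after_eq_self i k : (after i k == i) = (k %% 5 == 0).
Proof. by rewrite -{2}(after0 i) eq_after. Qed.

Lemma after_mod i k l : k = l %[mod 5] -> after i k = after i l.
Proof. by move=> kl; apply/eqP; rewrite eq_after; apply/eqP. Qed.

Lemma after_modn i k : after i (k %% 5) = after i k.
Proof. by apply: after_mod; rewrite modn_mod. Qed.

Lemma after_after_mod i k l : after (after i k) l = after i ((k + l) %% 5).
Proof. by rewrite after_after after_modn. Qed.

Lemma after_inv i j k : after j k = i -> j = after i (5 - k %% 5).
Proof.
move=> <-; rewrite after_after -{1}(after0 j); apply: after_mod.
by rewrite -modnDml subnKC ?modnn // ltnW // ltn_pmod.
Qed.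

Section Graph.
Variables (T : finType) (adj : rel T).
Hypotheses (adj_sym : symmetric adj) (adj_irr : irreflexive adj).
Local Notation N := (nbhd_in adj).

Lemma nbhd_inP (S : {set T}) v : reflect (exists2 u, u \in S & adj v u) (N S v != set0).
Proof.
apply: (iffP (set0Pn _)) => [[u] | [u uS vu]]; last by exists u; rewrite inE uS.
by rewrite inE => /andP[]; exists u.
Qed.

Lemma anticomplete_sym (A B : {set T}) : anticomplete adj A B -> anticomplete adj B A.
Proof. by move=> AB u v uB vA; rewrite adj_sym AB. Qed.

Lemma nbr_neq z x y : adj z x -> ~~ adj z y -> x != y.
Proof. by move=> zx; apply: contraNneq => <-. Qed.

(** * Induced paths and cycles *)

Ltac neq_by_adj := apply/eqP => E; subst;
  match goal with
  | H : is_true (adj ?x ?x) |- _ => by rewrite adj_irr in H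
  | H : is_true (adj ?x ?y), H' : is_true (~~ adj ?x ?y) |- _ => by rewrite H in H'
  | H : is_true (adj ?x ?y), H' : is_true (~~ adj ?y ?x) |- _ =>
      by rewrite adj_sym H in H'
  end.

Ltac uniq_by_adj :=
  rewrite /= !inE !negb_or; repeat (apply/andP; split) => //; neq_by_adj.

Ltac adj_by_hyps :=
  first [ by rewrite adj_irr | by [] | by rewrite adj_sym | by apply/negbTE
        | by rewrite adj_sym; apply/negbTE ].

(* Unlike those of C_6, C_7 and P_4, the adjacency pattern of C_4 does not force
   its vertices to be distinct. *)
Lemma has_induced_C4 a0 a1 a2 a3 :
  adj a0 a1 -> adj a1 a2 -> adj a2 a3 -> adj a3 a0 -> ~~ adj a0 a2 -> ~~ adj a1 a3 ->
  a0 != a2 -> a1 != a3 -> has_induced_C adj 4.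
Proof.
move=> *; exists [:: a0; a1; a2; a3]; split=> //; split; first by uniq_by_adj.
by move=> x0 [|[|[|[|i]]]] [|[|[|[|j]]]] //= _ _; adj_by_hyps.
Qed.

Lemma has_induced_C6 a0 a1 a2 a3 a4 a5 :
  adj a0 a1 -> adj a1 a2 -> adj a2 a3 -> adj a3 a4 -> adj a4 a5 -> adj a5 a0 ->
  ~~ adj a0 a2 -> ~~ adj a0 a3 -> ~~ adj a0 a4 -> ~~ adj a1 a3 -> ~~ adj a1 a4 ->
  ~~ adj a1 a5 -> ~~ adj a2 a4 -> ~~ adj a2 a5 -> ~~ adj a3 a5 ->
  has_induced_C adj 6.
Proof.
move=> *; exists [:: a0; a1; a2; a3; a4; a5]; split=> //; split; first by uniq_by_adj.
by move=> x0 [|[|[|[|[|[|i]]]]]] [|[|[|[|[|[|j]]]]]] //= _ _; adj_by_hyps.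
Qed.

Lemma has_induced_C7 a0 a1 a2 a3 a4 a5 a6 :
  adj a0 a1 -> adj a1 a2 -> adj a2 a3 -> adj a3 a4 -> adj a4 a5 -> adj a5 a6 ->
  adj a6 a0 ->
  ~~ adj a0 a2 -> ~~ adj a0 a3 -> ~~ adj a0 a4 -> ~~ adj a0 a5 -> ~~ adj a1 a3 ->
  ~~ adj a1 a4 -> ~~ adj a1 a5 -> ~~ adj a1 a6 -> ~~ adj a2 a4 -> ~~ adj a2 a5 ->
  ~~ adj a2 a6 -> ~~ adj a3 a5 -> ~~ adj a3 a6 -> ~~ adj a4 a6 ->
  has_induced_C adj 7.
Proof.
move=> *; exists [:: a0; a1; a2; a3; a4; a5; a6]; split=> //.
split; first by uniq_by_adj.
by move=> x0 [|[|[|[|[|[|[|i]]]]]]] [|[|[|[|[|[|[|j]]]]]]] //= _ _; adj_by_hyps.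
Qed.

Lemma induces_P4_path a0 a1 a2 a3 :
  adj a0 a1 -> adj a1 a2 -> adj a2 a3 -> ~~ adj a0 a2 -> ~~ adj a0 a3 ->
  ~~ adj a1 a3 -> induces_P4 adj a0 a1 a2 a3.
Proof.
move=> *; exists [:: a0; a1; a2; a3]; split=> //; split; first by uniq_by_adj.
by move=> x0 [|[|[|[|i]]]] [|[|[|[|j]]]] //= _ _; adj_by_hyps.
Qed.

Lemma induces_P4_swap a b c d : induces_P4 adj a b c d -> induces_P4 adj a c b d.
Proof.
move=> [s [ps ips]]; exists s; split=> //; apply: (perm_trans ps).
by apply/permP => p /=; congr (_ + _); rewrite addnCA.
Qed.

Lemma induced_path_adjE s x y : induced_path adj s -> x \in s -> y \in s ->
  adj x y = ((index x s).+1 == index y s) || ((index y s).+1 == index x s).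
Proof.
move=> [_ pat] xs ys.
by rewrite -{1}(nth_index x xs) -{1}(nth_index x ys) pat ?index_mem.
Qed.

Lemma P4_shape a b c d : induces_P4 adj a b c d -> adj b c -> ~~ adj a d ->
  [&& adj a b, adj c d, ~~ adj a c & ~~ adj b d] ||
  [&& adj a c, adj b d, ~~ adj a b & ~~ adj c d].
Proof.
move=> [s [ps ips]] bc nad.
have abcd_s v : v \in [:: a; b; c; d] -> v \in s by rewrite (perm_mem ps).
have idx_lt v : v \in [:: a; b; c; d] -> index v s < 4.
  by move=> /abcd_s; rewrite -index_mem (perm_size ps).
have idx_uniq : uniq [seq index v s | v <- [:: a; b; c; d]].
  rewrite map_inj_in_uniq; first by rewrite -(perm_uniq ps); case: ips.
  by move=> v w /abcd_s vs /abcd_s ws; apply: index_inj.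
have [] : [/\ index a s < 4, index b s < 4, index c s < 4 & index d s < 4].
  by split; apply: idx_lt; rewrite !inE eqxx ?orbT.
rewrite !(induced_path_adjE ips) ?abcd_s ?inE ?eqxx ?orbT // in bc nad *.
move: idx_uniq => /=.
move: (index a s) (index b s) (index c s) (index d s) bc nad => pa pb pc pd.
rewrite !inE !negb_or; lia.
Qed.

(** * Neighbourhoods in cliques *)

Hypothesis noC4 : ~ has_induced_C adj 4.

Lemma common_nbrs_adj a b p q : a != b -> p != q -> ~~ adj a b ->
  adj a p -> adj p b -> adj a q -> adj q b -> adj p q.
Proof.
move=> ab pq nab ap pb aq qb; apply: contraT => npq; case: noC4.
by apply: (@has_induced_C4 a p b q) => //; rewrite adj_sym.
Qed.

Lemma clique_nbhd_nested (K : {set T}) a b : is_clique adj K ->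
  a \notin K -> b \notin K -> adj a b -> (N K a \subset N K b) || (N K b \subset N K a).
Proof.
move=> cK aK bK ab; apply: contraT; rewrite negb_or.
case/andP=> /subsetPn[p pa pb] /subsetPn[q qb qa]; rewrite !inE in pa pb qa qb.
case/andP: pa qb => pK ap /andP[qK bq]; rewrite pK qK /= in pb qa.
have aq : a != q by apply: contraNneq aK => ->.
have pb' : p != b by apply: contraNneq bK => <-.
have pq : adj p q by apply: cK => //; apply: contraNneq qa => <-.
by rewrite adj_sym (common_nbrs_adj aq pb' qa ap pq ab) in pb.
Qed.

Lemma common_nbhd_sub_mid (K : {set T}) a m c : a != c -> ~~ adj a c ->
  adj a m -> adj m c -> m \notin K -> N K a :&: N K c \subset N K m.
Proof.
move=> ac nac am mc mK; apply/subsetP => p.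
rewrite !inE => /andP[/andP[pK ap] /andP[_ cp]].
have pm : p != m by apply: contraNneq mK => <-.
by rewrite pK adj_sym (common_nbrs_adj ac pm nac ap _ am mc) // adj_sym.
Qed.

Lemma nbhd_two_cliques (L R : {set T}) a b :
  [disjoint L & R] -> anticomplete adj L R -> a != b -> ~~ adj a b ->
  (N L a :&: N L b == set0) || (N R a :&: N R b == set0).
Proof.
move=> dLR aLR ab nab; apply: contraT; rewrite negb_or.
case/andP=> /set0Pn[p pab] /set0Pn[q qab]; move: pab qab; rewrite !inE.
case/andP=> /andP[pL ap] /andP[_ bp] /andP[/andP[qR aq] /andP[_ bq]].
have pq : p != q by apply: contraTneq qR => <-; rewrite (disjointFr dLR pL).
by move: (aLR p q pL qR); rewrite (common_nbrs_adj ab pq nab ap _ aq) // adj_sym.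
Qed.

Lemma nbhd_path_nested (K : {set T}) a m c : is_clique adj K ->
  a \notin K -> m \notin K -> c \notin K -> adj a m -> adj m c ->
  N K a != set0 -> N K m != set0 -> N K c != set0 -> N K a :&: N K c = set0 ->
  (N K a \subset N K m) && (N K c \subset N K m).
Proof.
move=> cK aK mK cK' am mc a0 m0 c0 ac0.
have sub0 (D : {set T}) : D \subset N K a -> D \subset N K c -> D = set0.
  by move=> Da Dc; apply/eqP; rewrite -subset0 -ac0 subsetI Da.
case/orP: (clique_nbhd_nested cK aK mK am) => [am'|ma];
  case/orP: (clique_nbhd_nested cK mK cK' mc) => [mc'|cm]; rewrite ?am' ?cm //.
- by rewrite (sub0 (N K a)) ?eqxx ?(subset_trans am' mc') in a0.
- by rewrite (sub0 (N K m)) ?eqxx in m0.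
- by rewrite (sub0 (N K c)) ?eqxx ?(subset_trans cm ma) in c0.
Qed.

Lemma setI0_notin (A B : {set T}) u : A :&: B = set0 -> u \in B -> u \notin A.
Proof.
by move=> AB0 uB; apply/negP => uA; have := in_set0 u; rewrite -AB0 inE uA uB.
Qed.

Lemma nbhd_setI0_nadj (S : {set T}) a b u :
  N S a :&: N S b = set0 -> u \in S -> adj b u -> ~~ adj a u.
Proof.
move=> ab0 uS bu; have : u \notin N S a by apply: setI0_notin ab0 _; rewrite inE uS.
by rewrite inE uS.
Qed.

Hypothesis noC6 : ~ has_induced_C adj 6.

Lemma nbhd_two_cliques_meet (L R : {set T}) a b :
  is_clique adj L -> is_clique adj R -> anticomplete adj L R -> ~~ adj a b ->
  N L a != set0 -> N L b != set0 -> N R a != set0 -> N R b != set0 ->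
  (N L a :&: N L b != set0) || (N R a :&: N R b != set0).
Proof.
move=> cL cR aLR nab /nbhd_inP[pa paL apa] /nbhd_inP[pb pbL bpb].
move=> /nbhd_inP[sa saR asa] /nbhd_inP[sb sbR bsb].
apply: contraT; rewrite negb_or !negbK => /andP[/eqP abL /eqP abR].
have napb := nbhd_setI0_nadj abL pbL bpb.
have nbpa := nbhd_setI0_nadj (etrans (setIC _ _) abL) paL apa.
have nasb := nbhd_setI0_nadj abR sbR bsb.
have nbsa := nbhd_setI0_nadj (etrans (setIC _ _) abR) saR asa.
case: noC6; apply: (@has_induced_C6 a pa pb b sb sa) => //; try exact: aLR.
- by apply: cL; rewrite // (nbr_neq apa napb).
- by rewrite adj_sym.
- by apply: cR; rewrite // eq_sym (nbr_neq asa nasb).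
- by rewrite adj_sym.
- by rewrite adj_sym.
Qed.

Definition attached (L R : {set T}) v :=
  [&& v \notin L, v \notin R, N L v != set0 & N R v != set0].

Lemma attachedC L R v : attached L R v = attached R L v.
Proof. by apply/and4P/and4P => -[*]; split. Qed.

Lemma attached_P4_half (L R : {set T}) y x u w :
  is_clique adj L -> is_clique adj R -> [disjoint L & R] -> anticomplete adj L R ->
  attached L R y -> attached L R x -> attached L R u -> attached L R w ->
  adj y x -> adj x u -> adj u w -> ~~ adj y u -> ~~ adj x w -> ~~ adj y w ->
  N R x :&: N R w = set0 -> False.
Proof.
move=> cL cR dLR aLR /and4P[yL yR yL0 yR0] /and4P[xL xR xL0 xR0].
move=> /and4P[uL uR uL0 uR0] /and4P[wL wR wL0 wR0] yx xu uw nyu nxw nyw xwR.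
have yu : y != u by rewrite eq_sym; apply: (nbr_neq (z := w)); rewrite adj_sym.
have xw : x != w := nbr_neq yx nyw.
have /andP[xuR wuR] := nbhd_path_nested cR xR uR wR xu uw xR0 uR0 wR0 xwR.
have [/eqP ywL | /set0Pn[p]] := boolP (N L y :&: N L w == set0).
  case/orP: (nbhd_two_cliques_meet cL cR aLR nyw yL0 wL0 yR0 wR0).
    by rewrite ywL eqxx.
  case/set0Pn => s; rewrite inE => /andP[syR swR].
  move/negP: (setI0_notin xwR swR); apply.
  apply: (subsetP (common_nbhd_sub_mid yu nyu yx xu xR)).
  by rewrite inE syR (subsetP wuR).
rewrite inE => /andP[pyL pwL].
have /set0Pn[s] : N R x :&: N R y != set0.
  have xy : adj x y by rewrite adj_sym.
  by case/orP: (clique_nbhd_nested cR xR yR xy) => [/setIidPl|/setIidPr] ->.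
rewrite inE => /andP[sxR syR].
have yuL : N L y :&: N L u = set0.
  case/orP: (nbhd_two_cliques dLR aLR yu nyu) => /eqP // yuR.
  by move/negP: (setI0_notin yuR (subsetP xuR s sxR)).
have /andP[yxL _] := nbhd_path_nested cL yL xL uL yx xu yL0 xL0 uL0 yuL.
move/negP: (setI0_notin (etrans (setIC _ _) yuL) pyL); apply.
by apply: (subsetP (common_nbhd_sub_mid xw nxw xu uw uL)); rewrite inE (subsetP yxL).
Qed.

Lemma no_attached_P4 (L R : {set T}) y x u w :
  is_clique adj L -> is_clique adj R -> [disjoint L & R] -> anticomplete adj L R ->
  attached L R y -> attached L R x -> attached L R u -> attached L R w ->
  adj y x -> adj x u -> adj u w -> ~~ adj y u -> ~~ adj x w -> ~~ adj y w -> False.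
Proof.
move=> cL cR dLR aLR ay ax au aw yx xu uw nyu nxw nyw.
(* x and w have no common neighbour in L or none in R; the two cases are
   symmetric. *)
case/orP: (nbhd_two_cliques dLR aLR (nbr_neq yx nyw) nxw) => /eqP xw0.
  apply: (attached_P4_half cR cL _ (anticomplete_sym aLR) _ _ _ _ yx xu uw) xw0;
    by rewrite 1?disjoint_sym // -attachedC.
exact: (attached_P4_half cL cR dLR aLR ay ax au aw yx xu uw).
Qed.

Hypothesis noC7 : ~ has_induced_C adj 7.

Lemma P5_hole (K : {set T}) z b c d r s s' :
  is_clique adj K -> s \in K -> s' \in K ->
  {in K, forall v, [&& ~~ adj b v, ~~ adj c v & ~~ adj d v]} ->
  adj z b -> adj b c -> adj c d -> adj d r -> adj r s -> adj z s' ->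
  ~~ adj z c -> ~~ adj z d -> ~~ adj z r -> ~~ adj b d -> ~~ adj b r -> ~~ adj c r ->
  False.
Proof.
move=> cK sK s'K farK zb bc cd dr rs zs' nzc nzd nzr nbd nbr ncr.
have /and3P[nbs ncs nds] := farK s sK; have /and3P[nbs' ncs' nds'] := farK s' s'K.
have [zs | nzs] := boolP (adj z s).
  by case: noC6; apply: (@has_induced_C6 z b c d r s); rewrite // adj_sym.
have [rs' | nrs'] := boolP (adj r s').
  by case: noC6; apply: (@has_induced_C6 z b c d r s'); rewrite // adj_sym.
case: noC7; apply: (@has_induced_C7 z b c d r s s') => //; try by rewrite adj_sym.
by apply: cK => //; apply: nbr_neq rs nrs'.
Qed.

(** * Nice blowups *)

Section Blowup.
Variable B : 'I_5 -> {set T}.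
Hypothesis hB : nice_blowup adj B.

Lemma blowup_clique j : is_clique adj (B j).
Proof. by case: hB => _ []. Qed.

Lemma blowup_disjoint i k l :
  k != l %[mod 5] -> [disjoint B (after i k) & B (after i l)].
Proof. by case: hB => dB _ kl; apply: dB; rewrite eq_after. Qed.

Lemma blowup_nbr i k l v : (l == k + 1 %[mod 5]) || (k == l + 1 %[mod 5]) ->
  v \in B (after i k) -> N (B (after i l)) v != set0.
Proof.
case: hB => _ [_ [nB _]] kl vB; apply/nbhd_inP.
have [[u uB vu] [u' uB' vu']] := nB _ _ vB.
case/orP: kl => /eqP kl; [exists u' | exists u] => //.
  by rewrite (after_mod _ kl) -after_after.
rewrite prvE after_after (after_mod _ (_ : k + 4 = l %[mod 5])) // in uB.
by rewrite -modnDml kl modnDml -addnA modnDr.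
Qed.

Lemma blowup_anti i k l : (l == k + 2 %[mod 5]) || (k == l + 2 %[mod 5]) ->
  anticomplete adj (B (after i k)) (B (after i l)).
Proof.
case: hB => _ [_ [_ [aB _]]] /orP[] /eqP kl.
  by have := aB (after i k); rewrite !nxtE !after_after -(after_mod _ kl).
apply: anticomplete_sym.
by have := aB (after i l); rewrite !nxtE !after_after -(after_mod _ kl).
Qed.

Lemma blowup_noP4 i k a b c d :
  a \in B (after i k) -> b \in B (after i (k + 1)) -> c \in B (after i (k + 1)) ->
  b != c -> d \in B (after i (k + 2)) -> ~ induces_P4 adj a b c d.
Proof.
case: hB => _ [_ [_ [_ p4]]] aB bB cB bc dB; apply: (p4 (after i k)) => //;
  by rewrite !nxtE !after_after // -addnA.
Qed.

Lemma blowup_common_nbr i k a d :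
  a \in B (after i k) -> d \in B (after i (k + 2)) ->
  exists2 c, c \in B (after i (k + 1)) & adj a c && adj c d.
Proof.
move=> aB dB.
have /nbhd_inP[b bB ab] : N (B (after i (k + 1))) a != set0.
  by apply: blowup_nbr aB; rewrite eqxx.
have /nbhd_inP[c cB dc] : N (B (after i (k + 1))) d != set0.
  by apply: blowup_nbr dB; apply/orP; right; rewrite -addnA eqxx.
have [bd | nbd] := boolP (adj b d); first by exists b; rewrite ?ab.
have [ac | nac] := boolP (adj a c); first by exists c; rewrite // ac adj_sym.
have bc := nbr_neq ab nac.
case: (blowup_noP4 aB bB cB bc dB); apply: induces_P4_path => //.
- exact: blowup_clique bB cB bc.
- by rewrite adj_sym.
- by apply: blowup_anti aB dB; rewrite eqxx.
Qed.

Definition fits_at i v :=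
  (forall k, k %% 5 \in [:: 1; 4] -> N (B (after i k)) v != set0) /\
  (forall k u, u \in B (after i k) -> k %% 5 \in [:: 2; 3] -> ~~ adj v u).

Lemma blowup_middle_hole i z1 z2 p q : fits_at i z1 -> fits_at i z2 ->
  adj z1 z2 -> p \in B (after i 4) -> q \in B (after i 1) ->
  adj z1 p -> adj z2 q -> ~~ adj z1 q -> ~~ adj z2 p -> False.
Proof.
move=> [_ z1f] [_ z2f] z12 pB qB z1p z2q nz1q nz2p.
have /nbhd_inP[q2 q2B qq2] : N (B (after i 2)) q != set0 by apply: blowup_nbr qB.
have [r rB /andP[q2r rp]] := blowup_common_nbr (k := 2) q2B pB.
have npq2 : ~~ adj p q2 by apply: blowup_anti pB q2B.
have npq : ~~ adj p q by apply: blowup_anti pB qB.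
have nrq : ~~ adj r q by apply: blowup_anti rB qB.
have nz1r := z1f _ _ rB isT; have nz1q2 := z1f _ _ q2B isT.
have nz2r := z2f _ _ rB isT; have nz2q2 := z2f _ _ q2B isT.
by case: noC6; apply: (@has_induced_C6 z1 p r q2 q z2) => //; rewrite adj_sym.
Qed.

(* Going around the cycle from B_i forwards (e = 1) or backwards (e = 4), the
   m-th bag is B (after i (m * e %% 5)). *)
Lemma blowup_end_hole i e z b c d : (e == 1) || (e == 4) -> fits_at i z ->
  b \in B (after i e) -> c \in B (after i e) -> d \in B (after i (2 * e %% 5)) ->
  adj z b -> ~~ adj z c -> adj c d -> ~~ adj b d -> False.
Proof.
move=> /pred2P he [zn zf] bB cB dB zb nzc cd nbd.
have [r rB dr] : exists2 r, r \in B (after i (3 * e %% 5)) & adj d r.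
  by apply/nbhd_inP; apply: blowup_nbr dB; case: he => ->.
have [s sB rs] : exists2 s, s \in B (after i (4 * e %% 5)) & adj r s.
  by apply/nbhd_inP; apply: blowup_nbr rB; case: he => ->.
have [s' s'B zs'] : exists2 s', s' \in B (after i (4 * e %% 5)) & adj z s'.
  by apply/nbhd_inP; apply: zn; case: he => ->.
have far : {in B (after i (4 * e %% 5)), forall v,
    [&& ~~ adj b v, ~~ adj c v & ~~ adj d v]}.
  move=> v vB; apply/and3P; split;
    [apply: blowup_anti bB vB | apply: blowup_anti cB vB | apply: blowup_anti dB vB];
    by case: he => ->.
apply: (P5_hole (@blowup_clique _) sB s'B far zb _ cd dr rs zs' nzc _ _ nbd).
- by apply: blowup_clique bB cB _; apply: nbr_neq zb nzc.
- by apply: (zf _ _ dB); case: he => ->.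
- by apply: (zf _ _ rB); case: he => ->.
- by apply: blowup_anti bB rB; case: he => ->.
- by apply: blowup_anti cB rB; case: he => ->.
Qed.

Lemma blowup_fits i v : v \in B i -> fits_at i v.
Proof.
rewrite -{1}(after0 i) => vB; split=> [k | k u]; rewrite -after_modn !inE.
  by case/pred2P=> ->; apply: blowup_nbr vB.
by move=> uB /pred2P[] km; rewrite km in uB; apply: blowup_anti vB uB.
Qed.

Lemma in_supp v j : (j \in supp adj B v) = (N (B j) v != set0).
Proof.
rewrite inE; apply/existsP/nbhd_inP => [[u /andP[]] | [u uB vu]]; first by exists u.
by exists u; rewrite uB.
Qed.

Lemma A3_fits i x : x \in A3 adj B i -> x \notin vert B /\ fits_at i x.
Proof.
rewrite inE => /andP[xV /eqP sx]; split=> //.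
split=> [k | k u uB]; rewrite !inE => /pred2P km.
  by rewrite -in_supp sx -after_modn !inE prvE nxtE; case: km => ->; rewrite eqxx ?orbT.
apply: contraT => /negbNE xu.
have : after i k \in supp adj B x by rewrite in_supp; apply/nbhd_inP; exists u.
by rewrite sx -after_modn !inE prvE nxtE; case: km => ->; rewrite !eq_after after_eq_self.
Qed.

Lemma notin_vert_bag v j : v \notin vert B -> v \in B j = false.
Proof. by move=> vV; apply: contraNF vV => vj; apply/bigcupP; exists j. Qed.

(** * Adding a vertex to a bag *)

Definition blowup_add i x j : {set T} := if j == i then x |: B j else B j.

Section Extension.
Variables (i : 'I_5) (x : T).
Hypotheses (xV : x \notin vert B) (xBi : {in B i, forall w, adj x w}) (fx : fits_at i x).
Local Notation B' := (blowup_add i x).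

Lemma in_blowup_add j v : v \in B' j = ((j == i) && (v == x)) || (v \in B j).
Proof. by rewrite /blowup_add; case: (j =P i) => //= ->; rewrite in_setU1. Qed.

Lemma blowup_addP j v : v \in B' j -> (v = x /\ j = i) \/ v \in B j.
Proof. by rewrite in_blowup_add => /orP[/andP[/eqP-> /eqP->] | ]; [left | right]. Qed.

Lemma blowup_add_off j : j != i -> B' j = B j.
Proof. by rewrite /blowup_add => /negbTE->. Qed.

Lemma blowup_add_sub j : {subset B j <= B' j}.
Proof. by move=> v vj; rewrite in_blowup_add vj orbT. Qed.

Lemma blowup_add_noP4_first b c d : b \in B (after i 1) -> c \in B (after i 1) ->
  b != c -> d \in B (after i 2) -> ~ induces_P4 adj x b c d.
Proof.
move=> bB cB bc dB /P4_shape/(_ (blowup_clique bB cB bc) (fx.2 _ _ dB isT)).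
case/orP=> /and4P[h1 h2 h3 h4].
  exact: (blowup_end_hole (e := 1) isT fx bB cB dB h1 h3 h2 h4).
exact: (blowup_end_hole (e := 1) isT fx cB bB dB h1 h3 h2 h4).
Qed.

Lemma blowup_add_noP4_last a b c : a \in B (after i 3) -> b \in B (after i 4) ->
  c \in B (after i 4) -> b != c -> ~ induces_P4 adj a b c x.
Proof.
move=> aB bB cB bc /P4_shape.
have nax : ~~ adj a x by rewrite adj_sym (fx.2 _ _ aB isT).
case/(_ (blowup_clique bB cB bc) nax)/orP => /and4P[h1 h2 h3 h4].
  by apply: (blowup_end_hole (e := 4) isT fx cB bB aB); rewrite adj_sym.
by apply: (blowup_end_hole (e := 4) isT fx bB cB aB); rewrite adj_sym.
Qed.

Lemma blowup_add_noP4_mid a c d :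
  a \in B (after i 4) -> c \in B i -> d \in B (after i 1) -> ~ induces_P4 adj a x c d.
Proof.
move=> aB cB dB /P4_shape.
have nad : ~~ adj a d by apply: blowup_anti aB dB.
have fc := blowup_fits cB; have cx : adj c x by rewrite adj_sym xBi.
case/(_ (xBi cB) nad)/orP => /and4P[h1 h2 h3 h4].
  by apply: (blowup_middle_hole fx fc (xBi cB) aB dB _ h2 h4); rewrite adj_sym.
by apply: (blowup_middle_hole fc fx cx aB dB _ h2 h4); rewrite adj_sym.
Qed.

Lemma blowup_add_noP4 j a b c d : a \in B' j -> b \in B' (nxt j) -> c \in B' (nxt j) ->
  b != c -> d \in B' (nxt (nxt j)) -> ~ induces_P4 adj a b c d.
Proof.
have [_ [_ [_ [_ p4B]]]] := hB; move=> aB bB cB bc dB.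
have [[-> ji] | {}aB] := blowup_addP aB.
  subst j.
  rewrite !nxtE !after_after_mod !blowup_add_off ?after_eq_self // in bB cB dB.
  exact: blowup_add_noP4_first bB cB bc dB.
have [[-> ji] | {}dB] := blowup_addP dB.
  rewrite !nxtE after_after in ji; rewrite (after_inv ji) in aB bB cB.
  rewrite !nxtE !after_after_mod !blowup_add_off ?after_eq_self // in bB cB.
  exact: blowup_add_noP4_last aB bB cB bc.
have mid b' c' : b' = x -> b' \in B' (nxt j) -> c' \in B' (nxt j) -> b' != c' ->
    ~ induces_P4 adj a b' c' d.
  move=> -> /blowup_addP[[_ ji] | ]; last by rewrite (notin_vert_bag _ xV).
  case/blowup_addP=> [[-> _] | c'B]; first by rewrite eqxx.
  rewrite ji in c'B dB; rewrite (after_inv ji) in aB => _.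
  exact: blowup_add_noP4_mid aB c'B dB.
have [bx | bnx] := eqVneq b x; first exact: mid.
have [cx | cnx] := eqVneq c x.
  by move/induces_P4_swap; apply: mid; rewrite // eq_sym.
have notx v k : v \in B' k -> v != x -> v \in B k.
  by case/blowup_addP=> [[->] | //]; rewrite eqxx.
exact: p4B j a b c d aB (notx _ _ bB bnx) (notx _ _ cB cnx) bc dB.
Qed.

Lemma nice_blowup_add : nice_blowup adj B'.
Proof.
have [dB [cB [nB [aB pB]]]] := hB.
split; [|split; [|split; [|split]]].
- move=> j k jk; rewrite disjoint_subset; apply/subsetP => v /blowup_addP[[-> ji]|vj].
    rewrite ji in jk.
    by rewrite !inE in_blowup_add eq_sym (negbTE jk) (notin_vert_bag _ xV).
  rewrite !inE in_blowup_add (disjointFr (dB _ _ jk) vj) orbF.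
  by apply: contraTN vj => /andP[_ /eqP->]; rewrite (notin_vert_bag _ xV).
- move=> j v w; rewrite !in_blowup_add; case: (j =P i) => [-> | _] /=; last exact: cB.
  case/orP=> [/eqP-> | vB] /orP[/eqP-> | wB] vw; first by rewrite eqxx in vw.
  + exact: xBi wB.
  + by rewrite adj_sym; apply: xBi.
  + exact: cB vB wB vw.
- move=> j v /blowup_addP[[-> ->] | vj].
    have [/nbhd_inP[u uB xu] /nbhd_inP[u' uB' xu']] := (fx.1 4 isT, fx.1 1 isT).
    by split; [exists u | exists u'] => //; apply: blowup_add_sub.
  have [[u uB vu] [u' uB' vu']] := nB _ _ vj.
  by split; [exists u | exists u'] => //; apply: blowup_add_sub.
- move=> j v w /blowup_addP[[-> ->] | vj] /blowup_addP[[-> ji] | wj].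
  + by move/eqP: ji; rewrite !nxtE after_after after_eq_self.
  + by rewrite !nxtE after_after in wj; apply: (fx.2 _ _ wj).
  + rewrite !nxtE after_after in ji; rewrite (after_inv ji) in vj.
    by rewrite adj_sym (fx.2 _ _ vj).
  + exact: aB vj wj.
exact: blowup_add_noP4.
Qed.

Lemma vert_blowup_add_proper : vert B \proper vert B'.
Proof.
apply/properP; split.
  apply/subsetP => v /bigcupP[j _ vj].
  by apply/bigcupP; exists j => //; apply: blowup_add_sub.
by exists x => //; apply/bigcupP; exists i => //; rewrite in_blowup_add !eqxx.
Qed.

End Extension.

Lemma complete_of_private_nbr i x y u : x \notin vert B -> y \notin vert B ->
  fits_at i x -> fits_at i y -> adj x y -> u \in B i -> adj x u -> ~~ adj y u ->
  {in B i, forall w, adj x w}.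
Proof.
move=> xV yV fx fy xy uB xu nyu w wB; apply: contraT => nxw.
have uw : adj u w by apply: blowup_clique uB wB _; apply: nbr_neq xu nxw.
have nyw : ~~ adj y w.
  apply: contra nyu => yw; rewrite adj_sym.
  apply: (common_nbrs_adj _ _ nxw xu uw xy yw).
    by apply: contraTneq wB => <-; rewrite (notin_vert_bag _ xV).
  by apply: contraTneq uB => ->; rewrite (notin_vert_bag _ yV).
have att v : fits_at i v -> v \notin B (after i 1) -> v \notin B (after i 4) ->
    attached (B (after i 1)) (B (after i 4)) v.
  by move=> [vn _] v1 v4; rewrite /attached v1 v4 !vn.
have att_out v : v \notin vert B -> fits_at i v ->
    attached (B (after i 1)) (B (after i 4)) v.
  by move=> vV fv; apply: att; rewrite // (notin_vert_bag _ vV).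
have att_in v : v \in B i -> attached (B (after i 1)) (B (after i 4)) v.
  move=> vB; apply: att (blowup_fits vB) _ _; rewrite -(after0 i) in vB.
    by rewrite (disjointFr (@blowup_disjoint i 0 1 isT) vB).
  by rewrite (disjointFr (@blowup_disjoint i 0 4 isT) vB).
have yx : adj y x by rewrite adj_sym.
case: (no_attached_P4 (@blowup_clique (after i 1)) (@blowup_clique (after i 4))
  (@blowup_disjoint i 1 4 isT) (@blowup_anti i 1 4 isT)
  (att_out y yV fy) (att_out x xV fx) (att_in u uB) (att_in w wB)
  yx xu uw nyu nxw nyw).
Qed.

Lemma A3_nbhd_sub i x y :
  ~ (exists B' : 'I_5 -> {set T}, nice_blowup adj B' /\ vert B \proper vert B') ->
  x \in A3 adj B i -> y \in A3 adj B i -> adj x y -> N (B i) x \subset N (B i) y.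
Proof.
move=> maxB /A3_fits[xV fx] /A3_fits[yV fy] xy.
apply/subsetP => u; rewrite !inE => /andP[uB xu]; rewrite uB /=; apply: contraT => nyu.
have xBi := complete_of_private_nbr xV yV fx fy xy uB xu nyu.
case: maxB; exists (blowup_add i x).
by split; [apply: nice_blowup_add | apply: vert_blowup_add_proper].
Qed.

End Blowup.
End Graph.

Theorem lemma8p3 (T : finType) (adj : rel T) (B : 'I_5 -> {set T}) (i : 'I_5)
  (x y : T) :
  simple_graph adj ->
  ~ has_induced_P adj 7 -> ~ has_induced_C adj 4 ->
  ~ has_induced_C adj 6 -> ~ has_induced_C adj 7 ->
  maximal_nice_blowup adj B ->
  x \in A3 adj B i -> y \in A3 adj B i -> adj x y ->
  nbhd_in adj (B i) x = nbhd_in adj (B i) y.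
Proof.
move=> [adj_sym adj_irr] _ noC4 noC6 noC7 [hB maxB] xA yA xy.
apply/eqP; rewrite eqEsubset !(A3_nbhd_sub adj_sym adj_irr noC4 noC6 noC7 hB maxB) //.
by rewrite adj_sym.
Qed.
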